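(* Let $n$ be a prime, let $\alpha$ be a primitive element of $\mathbb{F}_{2^n}$, and identify $\mathbb{F}_2^n$ with $\mathbb{F}_{2^n}$ as $\mathbb{F}_2$-vector spaces. Let $X=\{0,\alpha^{i_1},\dots,\alpha^{i_{2^k-1}}\}$ be a $k$-dimensional subspace with $|\Delta(X)|=(2^k-1)(2^k-2)$, where $\Delta(X)=\{i_r-i_s \bmod (2^n-1) : 1\le r,s\le 2^k-1,\ r\ne s\}$. Then the cyclic shifts $\alpha^jX$, $0\le j\le 2^n-2$, form $2^n-1$ distinct $k$-dimensional subspaces, and the $\frac{(2^k-1)(2^{k-1}-1)}{3}\cdot(2^n-1)$ two-dimensional subspaces contained in these $2^n-1$ subspaces (counted $\frac{(2^k-1)(2^{k-1}-1)}{3}$ per subspace) are all distinct.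
   Context: The exponents $i_r$ are taken in $\mathbb{Z}_{2^n-1}$. The cyclic shift map $\Phi_j$ sends $\alpha^i\mapsto\alpha^{i+j}$ and $0\mapsto 0$. A $k$-dimensional subspace over $\mathbb{F}_2$ contains exactly $\frac{(2^k-1)(2^{k-1}-1)}{3}$ two-dimensional subspaces. *)

From HB Require Import structures.
From mathcomp Require Import all_boot all_order all_algebra all_field.
Set Implicit Arguments. Unset Strict Implicit. Unset Printing Implicit Defensive.
Import GRing.Theory.
Local Open Scope ring_scope.

Definition cshift (F : finFieldType) (alpha : F) (j : nat) (X : {set F}) : {set F} :=
  [set alpha ^+ j * x | x in X].

Definition Delta (m k : nat) (i : 'I_(2 ^ k - 1) -> 'Z_m) : {set 'Z_m} :=
  [set i rs.1 - i rs.2 | rs in [set rs : 'I_(2 ^ k - 1) * 'I_(2 ^ k - 1) | rs.1 != rs.2]].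

From HB Require Import structures.
From mathcomp Require Import all_boot all_order all_algebra all_field.
Set Implicit Arguments. Unset Strict Implicit. Unset Printing Implicit Defensive.
Import GRing.Theory.
Local Open Scope ring_scope.

(* Writing X = {0} ∪ {α^(i_r)}, the hypothesis on |Δ(X)| says that the
   differences i_r - i_s (r ≠ s) are pairwise distinct, i.e. the exponents form
   a Sidon set in Z_(2^n-1): α^(i_r) α^(i_s') = α^(i_r') α^(i_s) with r ≠ s,
   r' ≠ s' forces r = r' and s = s'.  If j ≠ j' and y, z are nonzero common
   elements of α^j X and α^j' X, say y = α^j α^(i_r) = α^j' α^(i_s) and
   z = α^j α^(i_r') = α^j' α^(i_s'), then r ≠ s and multiplying out y z gives
   such a relation, so y = z.  Hence two distinct shifts meet in at most one
   nonzero point: they cannot be equal, and cannot share a plane. *)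

Lemma card_offdiag (T : finType) :
  #|[set p : T * T | p.1 != p.2]| = (#|T| * (#|T| - 1))%N.
Proof.
have -> : [set p : T * T | p.1 != p.2] = ~: [set (x, x) | x : T].
  apply/setP => -[a b]; rewrite !inE /=; congr negb.
  by apply/eqP/imsetP => [->|[c _ [-> ->]]]; first exists b.
rewrite cardsCs setCK card_prod card_imset; last by move=> a b [].
by rewrite mulnBr muln1.
Qed.

Lemma vspace_two_nonzero (K : fieldType) (vT : vectType K) (Y : {vspace vT}) :
  (1 < \dim Y)%N -> exists y z, [/\ y \in Y, z \in Y, y != 0, z != 0 & y != z].
Proof.
move=> dimY; pose b := vbasis Y.
have free_b : free b := basis_free (vbasisP Y).
have b0 : b`_0 \in b by apply: mem_nth; rewrite size_tuple ltnW.
have b1 : b`_1 \in b by apply: mem_nth; rewrite size_tuple.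
exists b`_0, b`_1; split; rewrite ?vbasis_mem //.
- exact: (free_not0 free_b b0).
- exact: (free_not0 free_b b1).
- by rewrite nth_uniq ?size_tuple ?(ltnW dimY) ?free_uniq.
Qed.

Lemma dim_limg_amull (K : fieldType) (L : fieldExtType K) (u : L) (V : {vspace L}) :
  u != 0 -> \dim (amull u @: V) = \dim V.
Proof.
move=> u0; have /eqP ker0 : lker (amull u) == 0%VS by rewrite lker0_amull ?unitfE.
by rewrite limg_dim_eq // ker0 capv0.
Qed.

Section PrimitiveRootExponents.

Variables (R : idomainType) (m : nat) (alpha : R).
Hypothesis alpha_prim : m.-primitive_root alpha.

Lemma prim_root_neq0 : alpha != 0.
Proof.
apply/eqP => alpha0; have := prim_expr_order alpha_prim.
rewrite alpha0 expr0n gtn_eqF ?(prim_order_gt0 alpha_prim) //= => /eqP.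
by rewrite eq_sym oner_eq0.
Qed.

Lemma prim_expr_inj (a b : nat) : (a < m)%N -> (b < m)%N ->
  alpha ^+ a = alpha ^+ b -> a = b.
Proof.
by move=> am bm /eqP; rewrite (eq_prim_root_expr alpha_prim) !modn_small // => /eqP.
Qed.

Lemma prim_expr_ord_inj : injective (fun j : 'I_m => alpha ^+ j).
Proof. by move=> a b /prim_expr_inj E; apply/val_inj/E. Qed.

Hypothesis m_gt1 : (1 < m)%N.

Lemma prim_expr_Zp_inj : injective (fun a : 'Z_m => alpha ^+ a).
Proof.
have ltm (c : 'Z_m) : (c < m)%N by rewrite -[X in (_ < X)%N]Zp_cast.
by move=> a b /prim_expr_inj E; apply/val_inj/E; apply: ltm.
Qed.

Lemma prim_expr_ZpD (a b : 'Z_m) : alpha ^+ (a + b)%R = alpha ^+ a * alpha ^+ b.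
Proof.
rewrite -exprD -[in RHS](prim_expr_mod alpha_prim) /=.
by rewrite [X in (_ %% X)%N]Zp_cast.
Qed.

End PrimitiveRootExponents.

Section SidonExponents.

Variables (R : idomainType) (m k : nat) (alpha : R).
Hypotheses (m_gt1 : (1 < m)%N) (alpha_prim : m.-primitive_root alpha).
Variable i : 'I_(2 ^ k - 1) -> 'Z_m.
Hypothesis Delta_full : #|Delta i| = ((2 ^ k - 1) * (2 ^ k - 2))%N.

Lemma Delta_injective :
  {in [set rs : 'I_(2 ^ k - 1) * 'I_(2 ^ k - 1) | rs.1 != rs.2] &,
    injective (fun rs => i rs.1 - i rs.2)}.
Proof.
by apply/imset_injP; rewrite card_offdiag card_ord -subnDA Delta_full.
Qed.

Lemma exprs_sidon (r s r' s' : 'I_(2 ^ k - 1)) : r != s -> r' != s' ->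
  alpha ^+ i r * alpha ^+ i s' = alpha ^+ i r' * alpha ^+ i s -> r = r' /\ s = s'.
Proof.
move=> rs rs'; rewrite -!prim_expr_ZpD // => /(prim_expr_Zp_inj alpha_prim m_gt1) sumE.
have diffE : i r - i s = i r' - i s'.
  by apply/eqP; rewrite subr_eq addrAC -sumE addrK.
have := @Delta_injective (r, s) (r', s'); rewrite !inE => /(_ rs rs' diffE).
by case=> -> ->.
Qed.

End SidonExponents.

Section CyclicShifts.

Variables (F : finFieldType) (m k : nat) (alpha : F).
Hypotheses (m_gt1 : (1 < m)%N) (alpha_prim : m.-primitive_root alpha).
Variable i : 'I_(2 ^ k - 1) -> 'Z_m.
Hypothesis Delta_full : #|Delta i| = ((2 ^ k - 1) * (2 ^ k - 2))%N.

Let P := 0 |: [set alpha ^+ i r | r : 'I_(2 ^ k - 1)].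

Let alphaX_neq0 (e : nat) : alpha ^+ e != 0.
Proof. by rewrite expf_neq0 // (prim_root_neq0 alpha_prim). Qed.

Lemma mem_cshift_P (j : nat) (y : F) : y \in cshift alpha j P -> y != 0 ->
  exists r, y = alpha ^+ j * alpha ^+ i r.
Proof.
case/imsetP=> x /setU1P[-> | /imsetP[r _ ->]] ->; last by exists r.
by rewrite mulr0 eqxx.
Qed.

Lemma cshift_meet (j j' : 'I_m) (y z : F) : j != j' -> y != 0 -> z != 0 ->
  y \in cshift alpha j P -> y \in cshift alpha j' P ->
  z \in cshift alpha j P -> z \in cshift alpha j' P -> y = z.
Proof.
move=> jj' y0 z0 /mem_cshift_P[//|r yE] /mem_cshift_P[//|s yE'].
move=> /mem_cshift_P[//|r' zE] /mem_cshift_P[//|s' zE'].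
have shifted_neq a b : alpha ^+ j * alpha ^+ i a = alpha ^+ j' * alpha ^+ i b -> a != b.
  move=> E; apply: contraNneq jj' => ab; move: E; rewrite ab => /mulIf E.
  by apply/eqP/(prim_expr_ord_inj alpha_prim)/E.
have cross : alpha ^+ i r * alpha ^+ i s' = alpha ^+ i r' * alpha ^+ i s.
  apply: (@mulfI _ (alpha ^+ j * alpha ^+ j')); first by rewrite mulf_neq0.
  by rewrite mulrACA [RHS]mulrACA -yE -zE -zE' -yE' mulrC.
have [rr' _] := exprs_sidon m_gt1 alpha_prim Delta_full
  (shifted_neq _ _ (etrans (esym yE) yE')) (shifted_neq _ _ (etrans (esym zE) zE')) cross.
by rewrite yE zE rr'.
Qed.

Lemma cshift_inj (j j' : 'I_m) : (0 < 2 ^ k - 1)%N ->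
  cshift alpha j P = cshift alpha j' P -> j = j'.
Proof.
move=> k_pos shiftE; case: (eqVneq j j') => // jj'; exfalso.
have inP r : alpha ^+ i r \in P by apply/setU1P; right; apply: imset_f.
have shifted_neq0 r : alpha ^+ j * alpha ^+ i r != 0 by rewrite mulf_neq0.
pose r0 := Ordinal k_pos.
have y_in : alpha ^+ j * alpha ^+ i r0 \in cshift alpha j P by apply: imset_f.
have /mem_cshift_P[//|r1 yE] : alpha ^+ j * alpha ^+ i r0 \in cshift alpha j' P.
  by rewrite -shiftE.
have z_in : alpha ^+ j * alpha ^+ i r1 \in cshift alpha j P by apply: imset_f.
have r01 : alpha ^+ i r0 = alpha ^+ i r1.
  by apply: (mulfI (alphaX_neq0 j)); apply: (cshift_meet jj'); rewrite -?shiftE.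
move: yE; rewrite r01 => /mulIf E.
by move/eqP: jj'; apply; apply/(prim_expr_ord_inj alpha_prim)/E.
Qed.

End CyclicShifts.


Theorem lemma7 (n k : nat) (F : finFieldType) (h2 : (2 \in [pchar F])%N)
    (hn : prime n) (hF : #|F| = (2 ^ n)%N)
    (alpha : F) (halpha : (2 ^ n - 1)%N.-primitive_root alpha)
    (X : {vspace pPrimeCharType h2}) (hk : (0 < k)%N) (hX : \dim X = k)
    (i : 'I_(2 ^ k - 1) -> 'Z_(2 ^ n - 1))
    (hXi : [set x : F | (x : pPrimeCharType h2) \in X]
           = 0 |: [set alpha ^+ (i r : nat) | r : 'I_(2 ^ k - 1)])
    (hDelta : #|Delta i| = ((2 ^ k - 1) * (2 ^ k - 2))%N) :
  let SX := [set x : F | (x : pPrimeCharType h2) \in X] in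
  (forall j : 'I_(2 ^ n - 1), exists Z : {vspace pPrimeCharType h2},
      \dim Z = k /\ [set x : F | (x : pPrimeCharType h2) \in Z] = cshift alpha j SX) /\
  (forall j j' : 'I_(2 ^ n - 1), cshift alpha j SX = cshift alpha j' SX -> j = j') /\
  (forall (j j' : 'I_(2 ^ n - 1)) (Y : {vspace pPrimeCharType h2}),
      \dim Y = 2%N ->
      (forall y : F, (y : pPrimeCharType h2) \in Y -> y \in cshift alpha j SX) ->
      (forall y : F, (y : pPrimeCharType h2) \in Y -> y \in cshift alpha j' SX) ->
      j = j').
Proof.
move=> SX.
have m_gt1 : (1 < 2 ^ n - 1)%N.
  by rewrite ltn_subRL (leq_trans _ (leq_pexp2l _ (prime_gt1 hn))).
have k_pos : (0 < 2 ^ k - 1)%N by rewrite subn_gt0 -{1}(expn0 2) ltn_exp2l.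
have SXE : SX = 0 |: [set alpha ^+ i r | r : 'I_(2 ^ k - 1)] := hXi.
split; [|split].
- move=> j; pose u : pPrimeCharType h2 := alpha ^+ j.
  have u0 : u != 0 by rewrite expf_neq0 // (prim_root_neq0 halpha).
  exists (amull u @: X)%VS; split; first by rewrite dim_limg_amull.
  apply/setP => y; rewrite inE.
  apply/memv_imgP/imsetP => [[x xX ->] | [x xS ->]]; exists x; rewrite ?lfunE //.
  + by rewrite inE.
  + by rewrite inE in xS.
- by rewrite SXE => j j'; apply: cshift_inj.
move=> j j' Y dimY; rewrite SXE => Yj Yj'.
have [|y [z [yY zY y0 z0]]] := @vspace_two_nonzero _ _ Y; first by rewrite dimY.
case: (eqVneq j j') => // jj'; case/eqP.
by apply: (cshift_meet m_gt1 halpha hDelta jj'); rewrite ?Yj ?Yj'.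
Qed.
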